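(* Let $G$ be a finite abstract simplicial complex. Then $w(B(x))=1$ for every $x \in G$.
   Context: A finite abstract simplicial complex $G$ is a finite set of non-empty finite sets such that every non-empty subset of an element of $G$ is again in $G$. For $y\in G$, $w(y)=(-1)^{|y|-1}$, and for $A\subset G$, $w(A)=\sum_{y\in A}w(y)$. $G$ carries the finite topology whose basis consists of the stars $U(x)=\{y\in G : x\subset y\}$. The unit ball $B(x)$ is the closure of $U(x)$ in this topology, i.e. $B(x)=\{y\in G : y\subset z \text{ for some } z\in G \text{ with } x\subset z\}$. *)

From mathcomp Require Import all_boot all_order all_algebra.
Set Implicit Arguments. Unset Strict Implicit. Unset Printing Implicit Defensive.
Import GRing.Theory Num.Theory.
Local Open Scope ring_scope.

Definition is_complex (T : finType) (G : {set {set T}}) : Prop :=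
  (forall y, y \in G -> y != set0) /\
  (forall (y z : {set T}), y \in G -> z \subset y -> z != set0 -> z \in G).

Definition wt (T : finType) (y : {set T}) : int := (-1) ^+ (#|y|.-1).

Definition wsum (T : finType) (A : {set {set T}}) : int := \sum_(y in A) wt y.

Definition star (T : finType) (G : {set {set T}}) (x : {set T}) : {set {set T}} :=
  [set y in G | x \subset y].

(* unit ball B(x) = closure of U(x) = { y in G | exists z in G, x ⊆ z /\ y ⊆ z } *)
Definition ball (T : finType) (G : {set {set T}}) (x : {set T}) : {set {set T}} :=
  [set y in G | [exists z in G, (x \subset z) && (y \subset z)]].

(* Pick a vertex v of x.  The ball B(x) contains [set v] and is closed under
   adding v (if y and x lie in a common face z, then so does v |: y) and
   under removing v (as long as something is left).  Hence y <-> v |: y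
   pairs the faces of B(x) not containing v with those containing v other
   than [set v]; the two faces of a pair have opposite weights, so only
   w([set v]) = 1 survives. *)

From mathcomp Require Import all_boot all_order all_algebra.
Import GRing.Theory.
Local Open Scope ring_scope.

Lemma wt_setU1 (T : finType) (v : T) (y : {set T}) :
  v \notin y -> y != set0 -> wt (v |: y) = - wt y.
Proof.
move=> vNy y_neq0; rewrite /wt cardsU1 vNy /=.
have : (0 < #|y|)%N by rewrite card_gt0.
by case: #|y| => // k _; rewrite exprS mulN1r.
Qed.

Lemma wsum_cone (T : finType) (A : {set {set T}}) (v : T) :
  set0 \notin A -> [set v] \in A ->
  {in A, forall y, v |: y \in A} ->
  {in A, forall y, y :\ v != set0 -> y :\ v \in A} ->
  wsum A = 1.
Proof.
move=> A_neq0 Av addv remv.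
have neq0 y : y \in A -> y != set0 by apply: contraTneq => ->.
set V := [set y : {set T} | v \in y].
have AV_cone : A :&: V = [set v] |: [set v |: y | y in A :\: V].
  apply/setP => y; rewrite !inE; apply/andP/orP => [[Ay vy] | ].
    have [-> | y_neq1] := eqVneq y [set v]; [by left | right].
    apply/imsetP; exists (y :\ v); last by rewrite setD1K.
    rewrite !inE eqxx /= remv //.
    by apply: contra_neq y_neq1 => yv0; rewrite -(setD1K vy) yv0 setU0.
  case=> [/eqP -> | /imsetP [u]]; first by rewrite Av set11.
  by rewrite !inE => /andP [_ Au] ->; rewrite addv // setU11.
have notin_cone : [set v] \notin [set v |: y | y in A :\: V].
  apply/imsetP => -[u]; rewrite !inE => /andP [vNu Au] uv.
  by move: (neq0 u Au); rewrite -(setU1K vNu) -uv setDv eqxx.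
have addv_inj : {in A :\: V &, injective (fun y => v |: y)}.
  move=> a b; rewrite !inE => /andP [vNa _] /andP [vNb _] ab.
  by rewrite -(setU1K vNa) -(setU1K vNb) ab.
rewrite /wsum (big_setID V) /= AV_cone big_setU1 //= big_imset //=.
rewrite (eq_bigr (fun y => - wt y)) => [|y]; last first.
  by rewrite !inE => /andP [vNy Ay]; rewrite wt_setU1 ?neq0.
by rewrite /wt cards1 expr0 sumrN subrK.
Qed.

Section UnitBall.

Variables (T : finType) (G : {set {set T}}).
Hypothesis G_complex : is_complex G.
Let G_neq0 := proj1 G_complex.
Let G_sub := proj2 G_complex.

Lemma ballP (x y : {set T}) :
  reflect (y \in G /\ exists2 z, z \in G & (x \subset z) && (y \subset z))
          (y \in ball G x).
Proof.
rewrite inE; apply: (iffP andP) => -[yG zP]; split=> //.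
  exact/exists_inP.
by apply/exists_inP.
Qed.

Lemma set0_notin_ball (x : {set T}) : set0 \notin ball G x.
Proof. by apply/ballP => -[/G_neq0]; rewrite eqxx. Qed.

Lemma set1_in_ball (x : {set T}) (v : T) :
  x \in G -> v \in x -> [set v] \in ball G x.
Proof.
move=> xG vx; apply/ballP; split; last by exists x; rewrite ?subxx ?sub1set.
apply: (G_sub _ _ xG); first by rewrite sub1set.
by apply/set0Pn; exists v; rewrite set11.
Qed.

Lemma ball_setU1 (x y : {set T}) (v : T) :
  v \in x -> y \in ball G x -> v |: y \in ball G x.
Proof.
move=> vx /ballP [_ [z zG /andP [xz yz]]].
have vyz : v |: y \subset z by rewrite subUset sub1set (subsetP xz).
apply/ballP; split; last by exists z; rewrite ?xz.
by apply: (G_sub _ _ zG vyz); apply/set0Pn; exists v; rewrite setU11.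
Qed.

Lemma ball_setD1 (x y : {set T}) (v : T) :
  y \in ball G x -> y :\ v != set0 -> y :\ v \in ball G x.
Proof.
move=> /ballP [yG [z zG /andP [xz yz]]] yv_neq0.
have yvy := subD1set y v.
apply/ballP; split; first exact: (G_sub _ _ yG yvy).
by exists z; rewrite ?xz ?(subset_trans yvy yz).
Qed.

End UnitBall.

Theorem mainTheorem3 (T : finType) (G : {set {set T}}) :
  is_complex G -> forall x, x \in G -> wsum (ball G x) = 1%R.
Proof.
move=> G_complex x xG.
have [v vx] : exists v, v \in x by apply/set0Pn; exact: (proj1 G_complex).
apply: (@wsum_cone _ _ v).
- exact: set0_notin_ball.
- exact: set1_in_ball.
- by move=> y; apply: ball_setU1.
- by move=> y; apply: ball_setD1.
Qed.
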